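(* Let $W\in C^1(\mathbb{R})$ satisfy (W-i) there is $\eta>0$ with $W(s)\geq\eta s^2$ for $|s|\leq1$ and $W(s)\geq\eta$ for $|s|\geq1$; (W-ii) $W''(0)=1$; (W-iii) there are $M>0$, $\alpha\in[0,2)$ with $W(s)\leq M|s|^\alpha$ for $s\geq0$. Let $\mathbf{u}_n$ be a sequence in $X$ with $E(\mathbf{u}_n)\to0$. Then, up to a subsequence, $\|\mathbf{u}_n\|\to0$.
   Context: $X=H^2(\mathbb{R})\times L^2(\mathbb{R})$ with elements $\mathbf{u}=(u,v)$ and norm $\|\mathbf{u}\|^2=\int(v^2+u_{xx}^2+u^2)\,dx$; $E(\mathbf{u})=\frac12\int(v^2+u_{xx}^2)\,dx+\int W(u)\,dx$. *)

From HB Require Import structures.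
From mathcomp Require Import all_boot all_order all_algebra.
From mathcomp Require Import all_classical all_reals all_analysis.
Set Implicit Arguments. Unset Strict Implicit. Unset Printing Implicit Defensive.
Import Order.TTheory GRing.Theory Num.Theory.
Import numFieldNormedType.Exports.
Local Open Scope classical_set_scope.
Local Open Scope ring_scope.

Section Defs.
Variable R : realType.
Local Notation mu := (@lebesgue_measure R).

Definition L2 (f : R -> R) : Prop :=
  measurable_fun setT f /\ mu.-integrable setT (fun x => (f x ^+ 2)%:E).

(* g is the weak (a.e.) derivative of the function f, i.e. f is absolutely
   continuous with f(b) - f(a) = \int_a^b g. *)
Definition weak_deriv (f g : R -> R) : Prop :=
  (forall a b : R, mu.-integrable `[a, b] (fun x => (g x)%:E)) /\
  (forall a b : R, a <= b -> f b - f a = \int[mu]_(x in `[a, b]) g x).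

(* u in H^2(R), with (representatives of) weak first derivative du and
   weak second derivative ddu. *)
Definition H2 (u du ddu : R -> R) : Prop :=
  [/\ L2 u, L2 du, L2 ddu, weak_deriv u du & weak_deriv du ddu].

Definition inX (u du ddu v : R -> R) : Prop := H2 u du ddu /\ L2 v.

Definition Xnorm (u ddu v : R -> R) : R :=
  Num.sqrt (fine (\int[mu]_x ((v x ^+ 2 + ddu x ^+ 2 + u x ^+ 2)%:E))).

Definition Energy (W : R -> R) (u ddu v : R -> R) : \bar R :=
  ((2^-1)%:E * \int[mu]_x ((v x ^+ 2 + ddu x ^+ 2)%:E)
   + \int[mu]_x ((W (u x))%:E))%E.

End Defs.

From HB Require Import structures.
From mathcomp Require Import all_boot all_order all_algebra.
From mathcomp Require Import all_classical all_reals all_analysis.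
From mathcomp Require Import ring lra measurable_realfun.
Set Implicit Arguments. Unset Strict Implicit. Unset Printing Implicit Defensive.
Import Order.TTheory GRing.Theory Num.Theory.
Import numFieldNormedType.Exports.
Local Open Scope classical_set_scope.
Local Open Scope ring_scope.

(* Small energy forces [|u| <= 2] everywhere. Indeed [\int u_xx^2 <= 2 E], and
   [|g| <= 1/4 + g^2] gives [|u(y) - u(x0) - u'(x0)(y - x0)| <= 1/4 + 2 E] for
   [|y - x0| <= 1]. If [|u(x0)| > 2] and [E <= 1/8], then on the unit interval
   on the side where this tangent moves away from [0] we get [|u| >= 1], hence
   [\int W(u) >= eta], impossible once [E < eta]. On [|s| <= 2], (W-i) yields
   [W(s) >= (eta/4) s^2], so [||u||^2 <= (2 + 4/eta) E]. *)

Section small_energy.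
Variable R : realType.
Local Notation mu := (@lebesgue_measure R).

Lemma fine_le_EFin (x : \bar R) (r : R) : (0 <= x)%E -> (x <= r%:E)%E -> fine x <= r.
Proof. by case: x => //= w; rewrite !lee_fin. Qed.

Lemma lebesgue_measure_itv_cc (a b : R) : a <= b -> mu `[a, b] = (b - a)%:E.
Proof.
move=> ab; rewrite lebesgue_measure_itv /= lte_fin.
by case: ltgtP ab => // -> _; rewrite subrr.
Qed.

Lemma integrable_itv_cst (a b k : R) : mu.-integrable `[a, b] (EFin \o cst k).
Proof.
apply/integrableP; split; first exact/measurable_EFinP/measurable_cst.
rewrite (_ : (fun x => `|(EFin \o cst k) x|)%E = cst `|k|%:E); last exact/funext.
rewrite integral_cst //= lebesgue_measure_itv /=.
by case: ifP => _; rewrite ?mule0 // -EFinD -EFinM ltry.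
Qed.

Lemma Rintegral_itv_cst (a b k : R) : a <= b ->
  \int[mu]_(x in `[a, b]) k = k * (b - a).
Proof.
by move=> ab; rewrite Rintegral_cst // (congr1 fine (lebesgue_measure_itv_cc ab)).
Qed.

Lemma Rintegral_itv_near_cst (G : R -> R) (a b c K : R) : a <= b ->
  mu.-integrable `[a, b] (EFin \o G) ->
  (forall t, a <= t <= b -> `|G t - c| <= K) ->
  `|\int[mu]_(x in `[a, b]) G x - c * (b - a)| <= K * (b - a).
Proof.
move=> ab iG GK.
have le_cst (f g : R -> R) : mu.-integrable `[a, b] (EFin \o f) ->
    mu.-integrable `[a, b] (EFin \o g) -> (forall t, a <= t <= b -> f t <= g t) ->
    \int[mu]_(x in `[a, b]) f x <= \int[mu]_(x in `[a, b]) g x.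
  by move=> iF iG' fg; apply: le_Rintegral => // x; rewrite /= in_itv => /fg.
have lo : (c - K) * (b - a) <= \int[mu]_(x in `[a, b]) G x.
  rewrite -Rintegral_itv_cst //; apply: le_cst => // [|t /GK]; first exact: integrable_itv_cst.
  by rewrite ler_norml; lra.
have hi : \int[mu]_(x in `[a, b]) G x <= (c + K) * (b - a).
  rewrite -Rintegral_itv_cst //; apply: le_cst => // [|t /GK]; first exact: integrable_itv_cst.
  by rewrite ler_norml; lra.
by rewrite ler_norml; apply/andP; split; nra.
Qed.

Lemma weak_deriv_tangent_bound (F G : R -> R) (x0 y K : R) : weak_deriv F G ->
  (forall t, `|t - x0| <= `|y - x0| -> `|G t - G x0| <= K) ->
  `|F y - F x0 - G x0 * (y - x0)| <= K * `|y - x0|.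
Proof.
move=> [iG FG] GK.
have near_x0 a b : a <= b -> (a = x0 \/ b = x0) -> `|y - x0| = b - a ->
    forall t, a <= t <= b -> `|G t - G x0| <= K.
  move=> ab ax0 d t /andP[ta tb]; apply: GK; rewrite d ler_norml.
  by case: ax0 => ?; subst; apply/andP; split; lra.
have [x0y|yx0] := boolP (x0 <= y); last rewrite -ltNge in yx0.
- have d : `|y - x0| = y - x0 by rewrite ger0_norm // subr_ge0.
  rewrite FG // d; apply: Rintegral_itv_near_cst => //.
  exact: near_x0 x0y (or_introl erefl) d.
- have d : `|y - x0| = x0 - y by rewrite ltr0_norm ?opprB // subr_lt0.
  rewrite d -[F y - F x0]opprB (FG _ _ (ltW yx0)) -normrN.
  set I := \int[mu]_(x in `[y, x0]) G x.
  have -> : - (- I - G x0 * (y - x0)) = I - G x0 * (x0 - y) by ring.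
  apply: Rintegral_itv_near_cst => //; first exact: ltW.
  exact: near_x0 (ltW yx0) (or_intror erefl) d.
Qed.

Lemma norm_Rintegral_itv_le_L2 (G : R -> R) (a b S : R) : a <= b ->
  mu.-integrable `[a, b] (EFin \o G) ->
  mu.-integrable setT (fun x => (G x ^+ 2)%:E) ->
  (\int[mu]_x ((G x ^+ 2)%:E) <= S%:E)%E ->
  `|\int[mu]_(x in `[a, b]) G x| <= (b - a) / 4 + S.
Proof.
move=> ab iG iG2 G2S.
have iG2ab : mu.-integrable `[a, b] (EFin \o (fun x => G x ^+ 2)).
  exact: integrableS iG2.
have iC := integrable_itv_cst a b 4^-1.
apply: (le_trans (le_normr_Rintegral _ iG)) => //.
apply: (@le_trans _ _ (\int[mu]_(x in `[a, b]) (4^-1 + G x ^+ 2))).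
  apply: le_Rintegral => //; first exact: integrable_norm.
    exact: integrableD iC iG2ab.
  (* [|g| <= 1/4 + g^2] since [(|g| - 1/2)^2 >= 0] *)
  move=> x _ /=; have := sqr_ge0 (`|G x| - 2^-1).
  by rewrite -[G x ^+ 2]real_normK ?num_real //; nra.
rewrite RintegralD // Rintegral_itv_cst // mulrC; apply: lerD => //.
have G2ge0 x : (0 <= (G x ^+ 2)%:E)%E by rewrite lee_fin sqr_ge0.
rewrite /Rintegral fine_le_EFin ?integral_ge0 //; apply: le_trans G2S.
by apply: ge0_subset_integral => //; exact: measurable_int iG2.
Qed.

Lemma weak_deriv2_tangent_bound (u du ddu : R -> R) (x0 y S : R) :
  weak_deriv u du -> weak_deriv du ddu ->
  mu.-integrable setT (fun x => (ddu x ^+ 2)%:E) ->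
  (\int[mu]_x ((ddu x ^+ 2)%:E) <= S%:E)%E -> `|y - x0| <= 1 ->
  `|u y - u x0 - du x0 * (y - x0)| <= 4^-1 + S.
Proof.
move=> uu' [iddu du_ddu] iddu2 ddu2S yx0.
have S0 : 0 <= S.
  by rewrite -lee_fin (le_trans _ ddu2S) // integral_ge0 // => x _; rewrite lee_fin sqr_ge0.
apply: (le_trans (weak_deriv_tangent_bound (K := 4^-1 + S) uu' _)); last first.
  by rewrite ler_piMr ?addr_ge0.
move=> t /le_trans /(_ yx0) tx0.
have [x0t|] := boolP (x0 <= t); last rewrite -ltNge => /ltW tx0'.
- rewrite du_ddu //.
  apply: le_trans (norm_Rintegral_itv_le_L2 x0t (iddu _ _) iddu2 ddu2S) _.
  by rewrite lerD2r ler_pdivrMr //; move: tx0; rewrite ger0_norm ?subr_ge0; lra.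
- rewrite -normrN opprB du_ddu //.
  apply: le_trans (norm_Rintegral_itv_le_L2 tx0' (iddu _ _) iddu2 ddu2S) _.
  by rewrite lerD2r ler_pdivrMr //; move: tx0; rewrite distrC ger0_norm ?subr_ge0; lra.
Qed.

Lemma norm_ge1_near_tangent (c e w : R) : 2 < `|c| -> 0 <= c * e ->
  `|w - c - e| <= 4^-1 + 4^-1 -> 1 <= `|w|.
Proof.
move=> c2 ce; rewrite ler_norml => /andP[lo hi].
have [c0|c0] := lerP 0 c.
- rewrite ger0_norm // in c2; have e0 : 0 <= e by nra.
  by rewrite ger0_norm; lra.
- rewrite ltr0_norm // in c2; have e0 : e <= 0 by nra.
  by rewrite ltr0_norm; lra.
Qed.

Lemma integral_ge_on_unit_itv (f : R -> R) (eta a : R) : 0 <= eta ->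
  (forall x, 0 <= f x) -> measurable_fun setT (EFin \o f) ->
  (forall x, a <= x <= a + 1 -> eta <= f x) ->
  (eta%:E <= \int[mu]_x (f x)%:E)%E.
Proof.
move=> eta0 f0 mf feta.
have a1 : a <= a + 1 by rewrite lerDl.
apply: (@le_trans _ _ (\int[mu]_(x in `[a, (a + 1)%R]) (f x)%:E)%E); last first.
  by apply: ge0_subset_integral => // x _; rewrite lee_fin.
apply: (@le_trans _ _ (\int[mu]_(x in `[a, (a + 1)%R]) (cst eta%:E x))%E).
  rewrite integral_cst //; set m := (X in (_ * X)%E).
  have -> : m = (a + 1 - a)%:E by exact: lebesgue_measure_itv_cc.
  by rewrite addrAC subrr add0r mule1.
by apply: ge0_le_integral => //; exact: measurable_funS mf.
Qed.

Lemma norm_le2_of_small_W_integral (W u du ddu : R -> R) (eta : R) :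
  0 < eta -> (forall s, 0 <= W s) -> (forall s, 1 <= `|s| -> eta <= W s) ->
  measurable_fun setT (EFin \o (W \o u)) ->
  weak_deriv u du -> weak_deriv du ddu ->
  mu.-integrable setT (fun x => (ddu x ^+ 2)%:E) ->
  (\int[mu]_x ((ddu x ^+ 2)%:E) <= (4^-1)%:E)%E ->
  (\int[mu]_x ((W (u x))%:E) < eta%:E)%E ->
  forall x0, `|u x0| <= 2.
Proof.
move=> eta0 W0 Weta mWu uu' du_ddu iddu2 ddu2 Wu x0.
rewrite leNgt; apply/negP => u2.
pose a := if 0 <= u x0 * du x0 then x0 else x0 - 1.
have side y : a <= y <= a + 1 -> `|y - x0| <= 1 /\ 0 <= u x0 * (du x0 * (y - x0)).
  rewrite /a mulrA ler_norml; case: ifP => s /andP[? ?].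
  - by split; [apply/andP; split; lra | apply: mulr_ge0 => //; lra].
  - move/negbT: s; rewrite -ltNge => s.
    by split; [apply/andP; split; lra | apply: mulr_le0; [exact: ltW | lra]].
suff : (eta%:E <= \int[mu]_x ((W (u x))%:E))%E by rewrite leNgt Wu.
apply: (integral_ge_on_unit_itv (a := a)) => // [|y /side [yx0 s]]; first exact: ltW.
apply: Weta; apply: (norm_ge1_near_tangent u2 s).
exact: weak_deriv2_tangent_bound uu' du_ddu iddu2 ddu2 yx0.
Qed.

Definition quadratic_well (W : R -> R) (eta : R) : Prop :=
  [/\ 0 < eta, forall s, `|s| <= 1 -> eta * s ^+ 2 <= W s
             & forall s, 1 <= `|s| -> eta <= W s].

Lemma quadratic_well_ge0 (W : R -> R) (eta s : R) : quadratic_well W eta -> 0 <= W s.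
Proof.
case=> eta0 Wsmall Wlarge; have [s1|s1] := lerP `|s| 1.
- by apply: le_trans (Wsmall s s1); rewrite mulr_ge0 ?sqr_ge0 ?ltW.
- by apply: le_trans (Wlarge s (ltW s1)); rewrite ltW.
Qed.

Lemma quadratic_well_ge_sqr (W : R -> R) (eta s : R) : quadratic_well W eta ->
  `|s| <= 2 -> eta / 4 * s ^+ 2 <= W s.
Proof.
case=> eta0 Wsmall Wlarge s2; rewrite -[s ^+ 2]real_normK ?num_real //.
have s0 := normr_ge0 s; have [s1|s1] := lerP `|s| 1.
- by move: (Wsmall s s1); rewrite -[s ^+ 2]real_normK ?num_real //; nra.
- have s4 : `|s| ^+ 2 <= 4 by nra.
  have : eta / 4 * `|s| ^+ 2 <= eta / 4 * 4 by rewrite ler_pM2l // divr_gt0.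
  by rewrite divfK ?pnatr_eq0 //; have := Wlarge s (ltW s1); lra.
Qed.

Lemma integral_sqr_le_W (W u : R -> R) (eta : R) : quadratic_well W eta ->
  measurable_fun setT u -> measurable_fun setT (EFin \o (W \o u)) ->
  (forall x, `|u x| <= 2) ->
  (\int[mu]_x ((u x ^+ 2)%:E) <= (4 / eta)%:E * \int[mu]_x ((W (u x))%:E))%E.
Proof.
move=> Weta mu_ mWu u2; have [eta0 _ _] := Weta.
have c0 : 0 <= 4 / eta by rewrite divr_ge0 //; exact: ltW.
have W0 x : (0 <= (W (u x))%:E)%E by rewrite lee_fin (quadratic_well_ge0 _ Weta).
rewrite -ge0_integralZl_EFin //.
apply: ge0_le_integral => //.
- by move=> x _; rewrite lee_fin sqr_ge0.
- exact/measurable_EFinP/measurable_funX.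
- exact: emeasurable_funM (measurable_cst _) mWu.
move=> x _; rewrite -EFinM lee_fin -ler_pdivrMl ?divr_gt0 // invf_div.
exact: quadratic_well_ge_sqr.
Qed.

Lemma EFin_of_half_adde (A B : \bar R) (e : R) : (0 <= A)%E -> (0 <= B)%E ->
  ((2^-1)%:E * A + B)%E = e%:E ->
  exists a b, [/\ A = a%:E, B = b%:E, 0 <= a, 0 <= b & a / 2 + b = e].
Proof.
case: A => [a| |]; case: B => [b| |] //=; rewrite ?lee_fin.
- by move=> a0 b0 [<-]; exists a, b; split; rewrite // mulrC.
all: by move=> _ _; rewrite mulry gtr0_sg ?invr_gt0 // mul1e.
Qed.

Lemma Xnorm_le_sqrt_Energy (W u du ddu v : R -> R) (eta e : R) :
  quadratic_well W eta -> continuous W -> inX u du ddu v ->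
  Energy W u ddu v = e%:E -> e <= 8^-1 -> e < eta ->
  Xnorm u ddu v <= Num.sqrt ((2 + 4 / eta) * e).
Proof.
move=> Weta cW [[[mu_ iu] _ [mddu iddu] uu' du_ddu] [mv _]] Ee e8 e_eta.
have [eta0 _ Wlarge] := Weta.
have W0 := quadratic_well_ge0 _ Weta.
have sqr0 (f : R -> R) x : (0 <= (f x ^+ 2)%:E)%E by rewrite lee_fin sqr_ge0.
have vddu0 x : (0 <= (v x ^+ 2 + ddu x ^+ 2)%:E)%E by rewrite lee_fin addr_ge0 ?sqr_ge0.
have mWu : measurable_fun setT (EFin \o (W \o u)).
  by apply/measurable_EFinP; exact: measurableT_comp (continuous_measurable_fun cW) mu_.
move: Ee; rewrite /Energy.
set A := (\int[mu]_x ((v x ^+ 2 + ddu x ^+ 2)%:E))%E.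
set B := (\int[mu]_x ((W (u x))%:E))%E => AB.
have mvddu : measurable_fun setT (fun x => (v x ^+ 2 + ddu x ^+ 2)%:E).
  by apply/measurable_EFinP; apply: measurable_funD; apply: measurable_funX.
have A0 : (0 <= A)%E by apply: integral_ge0.
have B0 : (0 <= B)%E by apply: integral_ge0 => x _; rewrite lee_fin.
have [a [b [Aa Bb a0 b0 ab]]] := EFin_of_half_adde A0 B0 AB.
have ddu2 : (\int[mu]_x ((ddu x ^+ 2)%:E) <= (4^-1)%:E)%E.
  apply: (@le_trans _ _ A); last by rewrite Aa lee_fin; lra.
  apply: ge0_le_integral => //; first exact: measurable_int iddu.
  by move=> x _; rewrite lee_fin lerDr sqr_ge0.
have Weta' : (B < eta%:E)%E by rewrite Bb lte_fin; lra.
have u2 := norm_le2_of_small_W_integral eta0 W0 Wlarge mWu uu' du_ddu iddu ddu2 Weta'.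
have U := integral_sqr_le_W Weta mu_ mWu u2.
have AU : (\int[mu]_x ((v x ^+ 2 + ddu x ^+ 2 + u x ^+ 2)%:E) =
    A + \int[mu]_x ((u x ^+ 2)%:E))%E.
  by rewrite /A -ge0_integralD //; exact: measurable_int iu.
rewrite /Xnorm AU ler_wsqrtr // fine_le_EFin //.
  by rewrite adde_ge0 // integral_ge0.
rewrite Aa (le_trans (leeD2l _ U)) // -/B Bb -EFinM -EFinD lee_fin.
have c0 : 0 <= 4 / eta by rewrite divr_ge0 //; exact: ltW.
by move: c0; set c := 4 / eta; nra.
Qed.

Lemma cvg0_Xnorm_of_Energy (W : R -> R) (eta : R) (u du ddu v : nat -> R -> R) :
  quadratic_well W eta -> continuous W -> (forall n, inX (u n) (du n) (ddu n) (v n)) ->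
  Energy W (u n) (ddu n) (v n) @[n --> \oo] --> 0%E ->
  Xnorm (u n) (ddu n) (v n) @[n --> \oo] --> 0.
Proof.
move=> Weta cW uX /fine_cvgP[Efin Ecvg]; have [eta0 _ _] := Weta.
set e := fun n => fine (Energy W (u n) (ddu n) (v n)) in Ecvg.
have sqrt_cvg : Num.sqrt ((2 + 4 / eta) * e n) @[n --> \oo] --> 0.
  rewrite -sqrtr0 -(mulr0 (2 + 4 / eta)).
  by apply: continuous_cvg; [exact: sqrt_continuous | apply: cvgM Ecvg; exact: cvg_cst].
apply: (squeeze_cvgr _ (cvg_cst 0) sqrt_cvg).
have small : 0 < Num.min 8^-1 eta by rewrite lt_min eta0 andbT invr_gt0.
near=> n; rewrite sqrtr_ge0 /=.
have : e n < Num.min 8^-1 eta by near: n; apply: (cvgr_lt 0).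
rewrite lt_min => /andP[e8 e_eta].
apply: Xnorm_le_sqrt_Energy Weta cW (uX n) _ (ltW e8) e_eta.
by rewrite /e fineK //; near: n.
Unshelve. all: end_near.
Qed.

End small_energy.

Theorem lemma2 (R : realType) (W : R -> R)
  (* W in C^1(R) *)
  (HWd : forall x : R, derivable W x 1)
  (HWc : continuous (derive1 W))
  (* (W-i) *)
  (HWi : exists eta : R, 0 < eta /\
     (forall s : R, `|s| <= 1 -> eta * s ^+ 2 <= W s) /\
     (forall s : R, 1 <= `|s| -> eta <= W s))
  (* (W-ii) W''(0) = 1 *)
  (HWii : derivable (derive1 W) 0 1 /\ derive1 (derive1 W) 0 = 1)
  (* (W-iii) *)
  (HWiii : exists (M alpha : R), 0 < M /\ 0 <= alpha < 2 /\
     (forall s : R, 0 <= s -> W s <= M * s `^ alpha))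
  (u du ddu v : nat -> R -> R)
  (Hx : forall n, inX (u n) (du n) (ddu n) (v n))
  (HE : (Energy W (u n) (ddu n) (v n)) @[n --> \oo] --> 0%E) :
  exists phi : nat -> nat, {homo phi : m n / (m < n)%N >-> (m < n)%N} /\
    (Xnorm (u (phi n)) (ddu (phi n)) (v (phi n))) @[n --> \oo] --> 0.
Proof.
have [eta [eta0 [Wsmall Wlarge]]] := HWi.
have cW : continuous W.
  by move=> x; apply: differentiable_continuous; apply/derivable1_diffP.
exists id; split => //.
by apply: (cvg0_Xnorm_of_Energy (eta := eta)) cW Hx HE; split.
Qed.
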